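(* Fix $\beta>0$ and for positive integers $p$ set $x_p=\beta^p/(\beta+1)^{p+1}$. Then $$\Phi_\beta(p,0)=\frac{\beta}{\beta+1}(1+x_p)+x_p\,\varepsilon_p,$$ where $\varepsilon_p\to 0$ as $p\to\infty$.
   Context: For $\beta>0$, $W_\beta$ is the random walk on $\mathbb{Z}^2$ starting at the origin which, independently at each step, moves from $(a,b)$ to $(a+1,b)$ with probability $1/(\beta+1)$ and to $(a,b+1)$ with probability $\beta/(\beta+1)$. For a nonnegative integer $p$, $\Phi_\beta(p,0)$ is the probability that $W_\beta$ visits at least one of the lattice points $(n,pn+1)$, $n\ge 0$. *)

From Stdlib Require Import Reals Arith.
Open Scope R_scope.

Definition is_target (p a b : nat) : bool := Nat.eqb b (p * a + 1)%nat.

(* hit_within beta p N a b = probability that the walk W_beta started at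
   (a,b) visits a target point at one of the times 0,1,...,N.
   A step goes to (a+1,b) w.p. 1/(beta+1) and to (a,b+1) w.p. beta/(beta+1). *)
Fixpoint hit_within (beta : R) (p : nat) (N a b : nat) : R :=
  if is_target p a b then 1 else
  match N with
  | O => 0
  | S N' => / (beta + 1) * hit_within beta p N' (S a) b
            + beta / (beta + 1) * hit_within beta p N' a (S b)
  end.

(* Phi_beta(p,0) = v : the probability that W_beta (from the origin) ever visits
   a target is v, i.e. the limit of the finite-horizon hitting probabilities
   (continuity of probability along the increasing events). *)
Definition Phi_is (beta : R) (p : nat) (v : R) : Prop :=
  Un_cv (fun N => hit_within beta p N 0%nat 0%nat) v.

Definition x_p (beta : R) (p : nat) : R := beta ^ p / (beta + 1) ^ (S p).

(* Write r = 1/(beta+1), q = beta/(beta+1) for the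
   probabilities of a right and an up step, so that x_p = r q^p.

   Let l be the limit of the finite-horizon hitting probabilities.
   - Lower bound: the walk hits (0,1) by one up step (probability q), or
     goes right once and then up p+1 times to (1,p+1) (probability
     r q^(p+1) = q x_p); hence l >= q (1 + x_p).
   - Upper bound: for 0 <= t with q + r t^(p+1) <= t, the function
     (a,b) |-> t^((p a + 1 - b)^+) is a supersolution of the hitting
     recursion, so every finite-horizon probability from the origin is <= t.
     Choosing t = q (1 + x_p (1 + 4 (p+1) x_p)) works as soon as
     (p+1) x_p <= 1/4, by a Bernoulli-type estimate of (1+y)^(p+1).
   Hence eps_p = (l - q (1 + x_p)) / x_p lies in [0, 4 (p+1) x_p], and
   (p+1) x_p -> 0 because it decays geometrically. *)
From Stdlib Require Import Reals Arith Lra Lia Psatz.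
Open Scope R_scope.

Lemma Un_cv_0_dominated (u w : nat -> R) (K c : R) :
  0 < c -> Un_cv w 0 ->
  (forall n, Rabs (w n) < c -> Rabs (u n) <= K * Rabs (w n)) ->
  Un_cv u 0.
Proof.
  intros Hc Hw Hdom e He.
  set (e' := Rmin c (e / (Rabs K + 1))).
  assert (He' : 0 < e').
  { apply Rmin_pos; [lra|]. apply Rdiv_lt_0_compat; [lra|].
    pose proof (Rabs_pos K); lra. }
  destruct (Hw e' He') as [N HN].
  exists N; intros n Hn; specialize (HN n Hn).
  unfold Rdist in *; rewrite Rminus_0_r in *.
  assert (Hsmall : Rabs (w n) < c) by (eapply Rlt_le_trans; [exact HN | apply Rmin_l]).
  assert (Hwe : Rabs (w n) * (Rabs K + 1) < e).
  { assert (Hlt : Rabs (w n) < e / (Rabs K + 1))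
      by (eapply Rlt_le_trans; [exact HN | apply Rmin_r]).
    pose proof (Rabs_pos K).
    apply Rmult_lt_compat_r with (r := Rabs K + 1) in Hlt; [|lra].
    unfold Rdiv in Hlt; rewrite Rmult_assoc, Rinv_l in Hlt; lra. }
  pose proof (Hdom n Hsmall); pose proof (Rle_abs K); pose proof (Rabs_pos (w n)).
  nra.
Qed.

(* Linear growth is beaten by geometric decay: (n+1) q^n -> 0 for 0 < q < 1.
   Indeed with s = sqrt q, Bernoulli's inequality (1/s)^n >= 1 + n (1/s - 1)
   gives (n+1) s^n <= C, so (n+1) q^n <= C s^n. *)
Lemma linear_times_geometric_cv q :
  0 < q < 1 -> Un_cv (fun n => INR (S n) * q ^ n) 0.
Proof.
  intros [Hq0 Hq1].
  set (s := sqrt q).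
  assert (Hs0 : 0 < s) by (apply sqrt_lt_R0; lra).
  assert (Hs1 : s < 1) by (unfold s; rewrite <- sqrt_1; apply sqrt_lt_1; lra).
  assert (Hss : s * s = q) by (apply sqrt_sqrt; lra).
  set (k := / s - 1).
  assert (Hk : 0 < k).
  { assert (1 < / s) by (rewrite <- Rinv_1; apply Rinv_lt_contravar; lra).
    unfold k; lra. }
  pose proof (Rinv_0_lt_compat k Hk) as Hk'.
  assert (Hlin : forall n, INR (S n) * s ^ n <= 1 + / k).
  { intro n.
    assert (Hsn : 0 < s ^ n) by (apply pow_lt; lra).
    assert (Hbern : s ^ n * (1 + INR n * k) <= 1).
    { pose proof (poly n k Hk) as P.
      replace (1 + k) with (/ s) in P by (unfold k; ring).
      rewrite pow_inv in P.
      apply Rmult_le_compat_l with (r := s ^ n) in P; [|lra].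
      rewrite Rinv_r in P by lra; exact P. }
    assert (INR (S n) <= (1 + / k) * (1 + INR n * k)).
    { rewrite S_INR.
      replace ((1 + / k) * (1 + INR n * k)) with (1 + INR n * k + / k + INR n)
        by (field; lra).
      pose proof (pos_INR n); nra. }
    nra. }
  apply (Un_cv_0_dominated _ (fun n => s ^ n) (1 + / k) 1); [lra| |].
  - intros e He.
    destruct (pow_lt_1_zero s ltac:(rewrite Rabs_right; lra) e He) as [N HN].
    exists N; intros n Hn; unfold Rdist; rewrite Rminus_0_r; auto.
  - intros n _.
    assert (Hsn : 0 < s ^ n) by (apply pow_lt; lra).
    rewrite (Rabs_right (s ^ n)), Rabs_right by (pose proof (pos_INR (S n));
      pose proof (pow_lt q n Hq0); nra).
    rewrite <- Hss, Rpow_mult_distr.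
    pose proof (Hlin n); nra.
Qed.

(* Bernoulli-type upper bound: (1+y)^n <= 1 + 2 n y whenever n y <= 1/2.
   It follows from (1+y)^n <= 1 + n y (1+y)^n. *)
Lemma pow_one_plus_upper y n :
  0 <= y -> INR n * y <= 1 / 2 -> (1 + y) ^ n <= 1 + 2 * INR n * y.
Proof.
  intros Hy Hn.
  assert (Hrec : forall m, (1 + y) ^ m <= 1 + INR m * y * (1 + y) ^ m).
  { induction m as [|m IH]; [simpl; lra|].
    rewrite S_INR; simpl (_ ^ S m).
    assert (1 <= (1 + y) ^ m) by (apply pow_R1_Rle; lra).
    pose proof (pos_INR m); nra. }
  specialize (Hrec n).
  pose proof (pos_INR n).
  set (A := (1 + y) ^ n) in *; set (z := INR n * y) in *.
  assert (0 <= z) by (unfold z; nra).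
  assert (A * (1 - z) <= 1) by (unfold z in *; nra).
  replace (2 * INR n * y) with (2 * z) by (unfold z; ring).
  assert (1 <= (1 + 2 * z) * (1 - z)) by nra.
  destruct (Rle_dec A (1 + 2 * z)) as [|Hgt]; auto.
  assert ((1 + 2 * z) * (1 - z) < A * (1 - z)) by (apply Rmult_lt_compat_r; lra).
  lra.
Qed.

Section HittingProbabilities.
Variable beta : R.
Hypothesis beta_pos : 0 < beta.

Lemma right_prob_pos : 0 < / (beta + 1).
Proof. apply Rinv_0_lt_compat; lra. Qed.

Lemma up_prob_pos : 0 < beta / (beta + 1).
Proof. apply Rdiv_lt_0_compat; lra. Qed.

Lemma step_probs_sum : / (beta + 1) + beta / (beta + 1) = 1.
Proof. field; lra. Qed.

Lemma x_p_geometric p : x_p beta p = / (beta + 1) * (beta / (beta + 1)) ^ p.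
Proof.
  unfold x_p, Rdiv. rewrite Rpow_mult_distr, pow_inv. simpl.
  assert ((beta + 1) ^ p <> 0) by (apply pow_nonzero; lra).
  field; split; lra.
Qed.

Lemma x_p_pos p : 0 < x_p beta p.
Proof.
  rewrite x_p_geometric.
  pose proof right_prob_pos; pose proof (pow_lt _ p up_prob_pos); nra.
Qed.

Variable p : nat.

Lemma hit_bounds N a b : 0 <= hit_within beta p N a b <= 1.
Proof.
  pose proof right_prob_pos; pose proof up_prob_pos; pose proof step_probs_sum.
  revert a b; induction N as [|N IH]; intros a b; simpl;
    destruct (is_target p a b); try lra.
  pose proof (IH (S a) b); pose proof (IH a (S b)); nra.
Qed.

Lemma hit_mono N a b : hit_within beta p N a b <= hit_within beta p (S N) a b.
Proof.
  pose proof right_prob_pos; pose proof up_prob_pos.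
  revert a b; induction N as [|N IH]; intros a b; cbn [hit_within];
    destruct (is_target p a b); try lra.
  - pose proof (hit_bounds 0 (S a) b); pose proof (hit_bounds 0 a (S b)).
    cbn [hit_within] in *; nra.
  - pose proof (IH (S a) b); pose proof (IH a (S b)); cbn [hit_within] in *; nra.
Qed.

Lemma Phi_exists : { l | Phi_is beta p l }.
Proof.
  apply growing_cv; [intro N; apply hit_mono|].
  exists 1; intros y [N ->]; apply hit_bounds.
Qed.

Lemma hit_climb m j :
  (j + m = p + 1)%nat -> (beta / (beta + 1)) ^ m <= hit_within beta p m 1 j.
Proof.
  pose proof right_prob_pos; pose proof up_prob_pos.
  revert j; induction m as [|m IH]; intros j Hj; cbn [hit_within]; unfold is_target.
  - replace (Nat.eqb j (p * 1 + 1)) with true; [simpl; lra|].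
    symmetry; apply Nat.eqb_eq; lia.
  - replace (Nat.eqb j (p * 1 + 1)) with false by (symmetry; apply Nat.eqb_neq; lia).
    pose proof (IH (S j) ltac:(lia)); pose proof (hit_bounds m 2 j).
    simpl (_ ^ S m); nra.
Qed.

(* The two routes "up" and "right, then up p+1 times" give the lower bound. *)
Lemma Phi_lower l : Phi_is beta p l -> beta / (beta + 1) * (1 + x_p beta p) <= l.
Proof.
  intro Hl.
  eapply Rle_trans; [|apply (growing_ineq _ _ (fun N => hit_mono N 0 0) Hl (S (S p)))].
  pose proof right_prob_pos; pose proof up_prob_pos.
  assert (Hup : hit_within beta p (S p) 0 1 = 1)
    by (cbn [hit_within]; unfold is_target; rewrite Nat.mul_0_r; reflexivity).
  pose proof (hit_climb (S p) 0 ltac:(lia)) as Hright.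
  change (hit_within beta p (S (S p)) 0 0) with
    (if is_target p 0 0 then 1 else / (beta + 1) * hit_within beta p (S p) 1 0
                                  + beta / (beta + 1) * hit_within beta p (S p) 0 1).
  unfold is_target at 1; rewrite Nat.mul_0_r, Hup, x_p_geometric; simpl Nat.eqb; cbv iota.
  simpl (_ ^ S p) in Hright; nra.
Qed.

Section Supersolution.
Variable t : R.
Hypothesis t_nonneg : 0 <= t.
Hypothesis t_super : beta / (beta + 1) + / (beta + 1) * t ^ (S p) <= t.

(* t raised to the vertical distance from (a,b) up to the target line
   (truncated at 0 above the line). *)
Definition super (a b : nat) : R := t ^ (p * a + 1 - b).

Lemma hit_le_super N a b : hit_within beta p N a b <= super a b.
Proof.
  pose proof right_prob_pos; pose proof up_prob_pos; pose proof step_probs_sum.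
  revert a b; induction N as [|N IH]; intros a b; cbn [hit_within];
    destruct (is_target p a b) eqn:Et; unfold super.
  1,3: apply Nat.eqb_eq in Et; rewrite Et, Nat.sub_diag; simpl; lra.
  - apply pow_le; lra.
  - apply Nat.eqb_neq in Et.
    destruct (le_lt_dec (p * a + 2) b) as [Habove|Hbelow].
    + (* above the line the supersolution equals 1 *)
      replace (p * a + 1 - b)%nat with 0%nat by lia.
      pose proof (hit_bounds N (S a) b); pose proof (hit_bounds N a (S b)).
      simpl; nra.
    + (* below the line: distance k+1 here, k after an up step, k+1+p after
         a right step, and q t^k + r t^(k+1+p) <= t^(k+1) *)
      set (k := (p * a - b)%nat).
      pose proof (IH (S a) b) as Hr; pose proof (IH a (S b)) as Hu; unfold super in *.
      replace (p * a + 1 - b)%nat with (S k) by (unfold k; lia).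
      replace (p * a + 1 - S b)%nat with k in Hu by (unfold k; lia).
      replace (p * S a + 1 - b)%nat with (k + S p)%nat in Hr
        by (unfold k; rewrite Nat.mul_succ_r; lia).
      rewrite pow_add in Hr.
      assert (0 <= t ^ k) by (apply pow_le; lra).
      simpl (t ^ S k); nra.
Qed.

Lemma Phi_le_super l : Phi_is beta p l -> l <= t.
Proof.
  intro Hl.
  assert (Horigin : super 0 0 = t) by (unfold super; rewrite Nat.mul_0_r; simpl; ring).
  rewrite <- Horigin.
  apply (@Rle_cv_lim _ (fun _ => super 0 0) _ _ (fun N => hit_le_super N 0 0) Hl).
  intros e He; exists 0%nat; intros; unfold Rdist; rewrite Rminus_diag, Rabs_R0; lra.
Qed.
End Supersolution.

Lemma Phi_upper l :
  Phi_is beta p l -> INR (S p) * x_p beta p <= 1 / 4 ->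
  l <= beta / (beta + 1) * (1 + x_p beta p * (1 + 4 * INR (S p) * x_p beta p)).
Proof.
  intros Hl Hsmall.
  pose proof right_prob_pos as Hr; pose proof up_prob_pos as Hq.
  pose proof (x_p_geometric p) as Hx; pose proof (x_p_pos p) as Hx0.
  set (q := beta / (beta + 1)) in *; set (r := / (beta + 1)) in *.
  set (x := x_p beta p) in *; set (n := INR (S p)) in *.
  assert (Hn : 1 <= n) by (unfold n; rewrite S_INR; pose proof (pos_INR p); lra).
  set (d := 4 * n * x); set (y := x * (1 + d)).
  assert (Hd : 0 <= d <= 1) by (unfold d; nra).
  assert (Hy : 0 <= y) by (unfold y; nra).
  assert (Hny : n * y <= d / 2) by (unfold y, d in *; nra).
  assert (Hpow : (1 + y) ^ S p <= 1 + d).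
  { assert (Hsmall' : INR (S p) * y <= 1 / 2) by (change (INR (S p)) with n; lra).
    pose proof (pow_one_plus_upper y (S p) Hy Hsmall') as Hbern.
    change (INR (S p)) with n in Hbern; lra. }
  apply (Phi_le_super (q * (1 + y))); [nra | | exact Hl].
  rewrite Rpow_mult_distr; change (beta / (beta + 1)) with q; change (/ (beta + 1)) with r.
  replace (r * (q ^ S p * (1 + y) ^ S p)) with (q * x * (1 + y) ^ S p)
    by (rewrite Hx; simpl; ring).
  assert (q * x * (1 + y) ^ S p <= q * x * (1 + d)) by (apply Rmult_le_compat_l; nra).
  replace (q * (1 + y)) with (q + q * x * (1 + d)) by (unfold y; ring); lra.
Qed.

Lemma normalised_error_bound l :
  Phi_is beta p l -> INR (S p) * x_p beta p <= 1 / 4 ->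
  0 <= (l - beta / (beta + 1) * (1 + x_p beta p)) / x_p beta p
    <= 4 * (INR (S p) * x_p beta p).
Proof.
  intros Hl Hsmall.
  pose proof (Phi_lower l Hl) as Hlow; pose proof (Phi_upper l Hl Hsmall) as Hup.
  pose proof (x_p_pos p) as Hx; pose proof up_prob_pos; pose proof step_probs_sum.
  pose proof right_prob_pos; pose proof (pos_INR (S p)).
  set (q := beta / (beta + 1)) in *; set (x := x_p beta p) in *.
  split.
  - apply Rmult_le_pos; [lra | left; apply Rinv_0_lt_compat; lra].
  - apply Rmult_le_reg_r with x; [lra|].
    unfold Rdiv; rewrite Rmult_assoc, Rinv_l by lra.
    nra.
Qed.

End HittingProbabilities.

(* (p+1) x_p -> 0, since x_p = r q^p with 0 < q < 1. *)
Lemma scaled_x_p_cv beta : 0 < beta -> Un_cv (fun p => INR (S p) * x_p beta p) 0.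
Proof.
  intro hb.
  pose proof (right_prob_pos beta hb); pose proof (up_prob_pos beta hb).
  pose proof (step_probs_sum beta hb).
  apply (Un_cv_0_dominated _ (fun n => INR (S n) * (beta / (beta + 1)) ^ n)
           (/ (beta + 1)) 1); [lra | apply linear_times_geometric_cv; lra |].
  intros n _.
  rewrite x_p_geometric by exact hb.
  replace (INR (S n) * (/ (beta + 1) * (beta / (beta + 1)) ^ n))
    with (/ (beta + 1) * (INR (S n) * (beta / (beta + 1)) ^ n)) by ring.
  rewrite Rabs_mult, (Rabs_right (/ (beta + 1))) by lra; lra.
Qed.

Theorem mainTheorem10 (beta : R) (hbeta : 0 < beta) :
  exists eps : nat -> R,
    Un_cv eps 0 /\
    forall p : nat, (1 <= p)%nat ->
      Phi_is beta p (beta / (beta + 1) * (1 + x_p beta p) + x_p beta p * eps p).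
Proof.
  set (Phi := fun p => proj1_sig (Phi_exists beta hbeta p)).
  exists (fun p => (Phi p - beta / (beta + 1) * (1 + x_p beta p)) / x_p beta p).
  split.
  - apply (Un_cv_0_dominated _ _ 4 (1 / 4) ltac:(lra) (scaled_x_p_cv beta hbeta)).
    intros p Hp.
    assert (Hw : 0 <= INR (S p) * x_p beta p)
      by (pose proof (pos_INR (S p)); pose proof (x_p_pos beta hbeta p); nra).
    rewrite (Rabs_right (INR (S p) * x_p beta p)) in Hp |- * by lra.
    pose proof (normalised_error_bound beta hbeta p (Phi p)
                  (proj2_sig (Phi_exists beta hbeta p)) ltac:(lra)).
    rewrite Rabs_right; lra.
  - intros p _.
    replace (beta / (beta + 1) * (1 + x_p beta p) +
             x_p beta p * ((Phi p - beta / (beta + 1) * (1 + x_p beta p)) / x_p beta p))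
      with (Phi p) by (field; pose proof (x_p_pos beta hbeta p); lra).
    exact (proj2_sig (Phi_exists beta hbeta p)).
Qed.
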